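(* Let $n\ge 2$ and for $a\in\{-1,1\}^n$ put $\pi(a)=|\{i\in\{1,\dots,n\}:a_i=1\}|-1$. Let $Q\subseteq\mathbb{R}^{n+1}$ be the set of $(x,x_{n+1})\in\mathbb{R}^n\times\mathbb{R}$ satisfying $ax-\pi(a)x_{n+1}\le 1$ for all $a\in\{-1,1\}^n$, together with $0\le x_{n+1}\le 2$. Then: (i) $Q$ is a polytope all of whose vertices are integral (its vertices with $x_{n+1}=0$ are $(\pm u_i,0)$ and those with $x_{n+1}=2$ are $(\mathbf{1}\pm(n-1)u_i,2)$, $u_i$ the unit vectors); (ii) $Q$ contains no integer point in its interior; (iii) for each of the $2^n+2$ defining inequalities there is an integer point of $Q$ satisfying this inequality with equality and all other defining inequalities strictly; in particular each defining inequality defines a facet of $Q$ containing an integer point in its relative interior.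
   Context: $\mathbf{1}$ denotes the all-ones vector in $\mathbb{R}^n$ and $u_1,\dots,u_n$ the standard unit vectors of $\mathbb{R}^n$. *)

From HB Require Import structures.
From mathcomp Require Import all_boot all_order all_algebra.
Set Implicit Arguments. Unset Strict Implicit. Unset Printing Implicit Defensive.
Import Order.TTheory GRing.Theory Num.Theory.
Local Open Scope ring_scope.

Section Defs.
Variables (R : realFieldType) (n : nat).

Definition pt := ('rV[R]_n * R)%type.

(* sign vector a in {-1,1}^n, coded by a boolean function: a_i = 1 iff a i *)
Definition sgnv (a : {ffun 'I_n -> bool}) (i : 'I_n) : R := if a i then 1 else -1.

Definition piv (a : {ffun 'I_n -> bool}) : R := (#|[set i | a i]|)%:R - 1.

(* index set of the 2^n + 2 defining inequalities:
   inl a  :  a x - pi(a) x_{n+1} <= 1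
   inr false : -x_{n+1} <= 0      (i.e. 0 <= x_{n+1})
   inr true  :  x_{n+1} <= 2 *)
Definition ineq_idx := ({ffun 'I_n -> bool} + bool)%type.

Definition ineq_lhs (k : ineq_idx) (p : pt) : R :=
  match k with
  | inl a => \sum_(i < n) sgnv a i * p.1 ord0 i - piv a * p.2
  | inr false => - p.2
  | inr true => p.2
  end.

Definition ineq_rhs (k : ineq_idx) : R :=
  match k with
  | inl _ => 1
  | inr false => 0
  | inr true => 2
  end.

Definition inQ (p : pt) : Prop := forall k, ineq_lhs k p <= ineq_rhs k.

Definition bounded_set (S : pt -> Prop) : Prop :=
  exists M : R, forall p, S p -> (forall i, `|p.1 ord0 i| <= M) /\ `|p.2| <= M.

Definition convcomb (l : R) (q r : pt) : pt :=
  (l *: q.1 + (1 - l) *: r.1, l * q.2 + (1 - l) * r.2).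

Definition is_vertex (S : pt -> Prop) (p : pt) : Prop :=
  S p /\ forall q r l, S q -> S r -> 0 < l -> l < 1 -> p = convcomb l q r -> q = r.

Definition is_integral (x : R) : Prop := exists z : int, x = z%:~R.

Definition int_point (p : pt) : Prop :=
  (forall i, is_integral (p.1 ord0 i)) /\ is_integral p.2.

Definition interior (S : pt -> Prop) (p : pt) : Prop :=
  exists eps : R, 0 < eps /\
    forall q : pt, (forall i, `|q.1 ord0 i - p.1 ord0 i| < eps) ->
      `|q.2 - p.2| < eps -> S q.

Definition unitv (i : 'I_n) : 'rV[R]_n := delta_mx ord0 i.
Definition onesv : 'rV[R]_n := const_mx 1.
Definition pm (s : bool) : R := if s then 1 else -1.

End Defs.

(* The key observation is that every horizontal slice of Q is an l1-ball.
   Since a (1) = 2|a^+| - n, the inequality of index a at height t reads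
   a (x - (t/2) 1) <= 1 + (t/2)(n - 2), and the maximum of a y over all sign
   vectors a is the l1-norm of y.  Hence the slice at height t in [0, 2] is
   the l1-ball with centre (t/2) 1 and radius 1 + (t/2)(n - 2): the
   cross-polytope at t = 0, and the ball of radius n - 1 around 1 at t = 2.

   A vertex of Q must lie on the face t = 0 or t = 2, because each
   intermediate point is a convex combination of a point of the bottom slice
   and a point of the top slice; on these faces vertices of Q are vertices of
   the slice, which gives (i).  For (ii), an integer interior point would lie
   at height 1, where the inequality indexed by the pattern [x_i >= 1] is
   already tight at x.  For (iii) explicit integer points are exhibited:
   (chi_a, 1) for the inequality a, and (0, 0), (1, 2) for the bounds on t. *)

From HB Require Import structures.
From mathcomp Require Import all_boot all_order all_algebra.
From mathcomp Require Import ring lra zify.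
Set Implicit Arguments. Unset Strict Implicit. Unset Printing Implicit Defensive.
Import Order.TTheory GRing.Theory Num.Theory.
Local Open Scope ring_scope.

Section L1Geometry.
Variables (R : realFieldType) (n : nat).
Implicit Types (a b : {ffun 'I_n -> bool}) (x y z : 'rV[R]_n) (i j : 'I_n).

Definition dot a y : R := \sum_i sgnv R a i * y ord0 i.
Definition l1 y : R := \sum_i `|y ord0 i|.
Definition cnt a : R := (#|[set i | a i]|)%:R.

Lemma pm_sqr (s : bool) : pm R s * pm R s = 1.
Proof. by case: s; rewrite /pm ?mulrNN mulr1. Qed.

Lemma pm_norm (s : bool) : `|pm R s| = 1.
Proof. by case: s; rewrite /pm ?normrN normr1. Qed.

Lemma pm_sign (u : R) : pm R (0 <= u) * u = `|u|.
Proof. by rewrite /pm; case: leP => hu; [rewrite mul1r ger0_norm | rewrite mulN1r ltr0_norm]. Qed.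

Lemma dot_le_l1 a y : dot a y <= l1 y.
Proof.
apply: ler_sum => i _; apply: le_trans (ler_norm _) _.
by rewrite normrM (pm_norm (a i)) mul1r.
Qed.

(* The l1-norm is the maximum of the forms a y; this is why the 2^n
   inequalities of Q describe an l1-ball in each slice. *)
Lemma l1_max y (r : R) : (forall a, dot a y <= r) <-> l1 y <= r.
Proof.
split=> [hdot | hl1 a]; last exact: le_trans (dot_le_l1 a y) hl1.
have <- : dot [ffun i => 0 <= y ord0 i] y = l1 y.
  by apply: eq_bigr => i _; rewrite /sgnv ffunE; exact: pm_sign.
exact: hdot.
Qed.

Lemma dot_lin a (c : R) y z : dot a (y + c *: z) = dot a y + c * dot a z.
Proof. by rewrite /dot mulr_sumr -big_split; apply: eq_bigr => i _; rewrite !mxE mulrDr mulrCA. Qed.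

Lemma sum_indicator a : \sum_i (if a i then 1 else 0 : R) = cnt a.
Proof. by rewrite -big_mkcond /= sumr_const /cnt cardsE. Qed.

Lemma dot_ones a : dot a (onesv R n) = cnt a * 2 - n%:R.
Proof.
rewrite /dot (eq_bigr (fun i => (if a i then 1 else 0) * 2 - 1)) => [|i _].
  by rewrite sumrB -mulr_suml sum_indicator sumr_const card_ord.
by rewrite mxE /sgnv; case: (a i); ring.
Qed.

Lemma l1_coord y i : `|y ord0 i| <= l1 y.
Proof. by rewrite /l1 (bigD1 i) //= lerDl sumr_ge0 // => j _; rewrite normr_ge0. Qed.

Lemma l1D y z : l1 (y + z) <= l1 y + l1 z.
Proof. by rewrite /l1 -big_split; apply: ler_sum => i _; rewrite mxE ler_normD. Qed.

Lemma l1Z (c : R) y : l1 (c *: y) = `|c| * l1 y.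
Proof. by rewrite /l1 mulr_sumr; apply: eq_bigr => i _; rewrite !mxE normrM. Qed.

Lemma unit_entry (c : R) i j : (c *: unitv R i) ord0 j = if j == i then c else 0.
Proof. by rewrite /unitv !mxE eqxx /=; case: eqP; rewrite ?mulr1 ?mulr0. Qed.

Lemma l1_unit (c : R) i : l1 (c *: unitv R i) = `|c|.
Proof.
rewrite /l1 (bigD1 i) //= big1 => [|j hj]; first by rewrite unit_entry eqxx addr0.
by rewrite unit_entry (negbTE hj) normr0.
Qed.

Definition center (t : R) : 'rV[R]_n := (t / 2) *: onesv R n.
Definition radius (t : R) : R := 1 + t / 2 * (n%:R - 2).

Lemma ineq_slice a x (t : R) :
  (dot a x - piv R a * t <= 1) = (dot a (x - center t) <= radius t).
Proof.
rewrite -scaleNr dot_lin dot_ones /piv -/(cnt a) /radius.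
by rewrite -[LHS]subr_ge0 -[RHS]subr_ge0; congr (0 <= _); field.
Qed.

Lemma inQE x (t : R) : inQ ((x, t) : pt R n) <->
  [/\ 0 <= t, t <= 2 & l1 (x - center t) <= radius t].
Proof.
split=> [hQ | [t_ge0 t_le2 hball] [a|[]] //=]; last 2 first.
- by rewrite -/(dot a x) ineq_slice; move/l1_max: hball.
- by rewrite oppr_le0.
split; [by have := hQ (inr false); rewrite /= oppr_le0 | exact: hQ (inr true) |].
by apply/l1_max => a; rewrite -ineq_slice; exact: hQ (inl a).
Qed.

Lemma inQ_height0 x : inQ ((x, 0) : pt R n) <-> l1 x <= 1.
Proof.
rewrite inQE /center /radius !mul0r scale0r subr0 addr0.
by split=> [[] | hx]; last split; rewrite ?lexx ?ler0n.
Qed.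

Lemma inQ_height2 x : inQ ((x, 2) : pt R n) <-> l1 (x - onesv R n) <= n%:R - 1.
Proof.
rewrite inQE /center /radius divff ?pnatr_eq0 // scale1r mul1r.
rewrite (_ : 1 + (n%:R - 2) = n%:R - 1); last by ring.
by split=> [[] | hx]; last split; rewrite ?lexx ?ler0n.
Qed.

Lemma ball_face y (rho : R) i (s : bool) : l1 y <= rho -> rho <= pm R s * y ord0 i ->
  y = (pm R s * rho) *: unitv R i.
Proof.
move=> hl hr.
have coord_le : pm R s * y ord0 i <= `|y ord0 i|.
  by apply: le_trans (ler_norm _) _; rewrite normrM pm_norm mul1r.
have norm_yi : `|y ord0 i| = rho.
  by apply/le_anti; rewrite (le_trans (l1_coord _ _) hl) (le_trans hr coord_le).
have yi : pm R s * y ord0 i = rho by apply/le_anti; rewrite hr -norm_yi coord_le.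
have rest0 : \sum_(j | j != i) `|y ord0 j| = 0.
  apply/le_anti; rewrite sumr_ge0 ?andbT => [|j _]; last exact: normr_ge0.
  by move: hl; rewrite /l1 (bigD1 i) //= norm_yi -lerBrDl subrr.
apply/matrixP => k j; rewrite (ord1 k) unit_entry.
case: eqP => [->|/eqP hj]; first by rewrite -yi mulrA pm_sqr mul1r.
by apply/normr0_eq0; apply: (psumr_eq0P _ rest0) => // m _; exact: normr_ge0.
Qed.

Lemma ball_vertex_extreme y1 y2 (rho l : R) i (s : bool) :
  l1 y1 <= rho -> l1 y2 <= rho -> 0 < l -> l < 1 ->
  (pm R s * rho) *: unitv R i = l *: y1 + (1 - l) *: y2 -> y1 = y2.
Proof.
move=> h1 h2 l_gt0 l_lt1 e.
have coord_le y : l1 y <= rho -> pm R s * y ord0 i <= rho.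
  move=> hy; apply: le_trans (ler_norm _) _.
  by rewrite normrM pm_norm mul1r (le_trans (l1_coord y i) hy).
have avg : l * (pm R s * y1 ord0 i) + (1 - l) * (pm R s * y2 ord0 i) = rho.
  have := congr1 (fun M : 'rV[R]_n => pm R s * M ord0 i) e.
  rewrite /= unit_entry eqxx mulrA pm_sqr mul1r !mxE => ->; ring.
have hA := coord_le _ h1; have hB := coord_le _ h2.
have eA : rho <= pm R s * y1 ord0 i by nra.
have eB : rho <= pm R s * y2 ord0 i by nra.
by rewrite (ball_face h1 eA) (ball_face h2 eB).
Qed.

Definition splits_in_ball (rho : R) y := exists y1 y2 (l : R),
  [/\ l1 y1 <= rho, l1 y2 <= rho, 0 < l < 1, y1 != y2 & y = l *: y1 + (1 - l) *: y2].

(* Interior points move along any coordinate direction. *)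
Lemma ball_interior_split i0 y (rho : R) : l1 y < rho -> splits_in_ball rho y.
Proof.
move=> hlt; set c := rho - l1 y.
have c_gt0 : 0 < c by rewrite subr_gt0.
have in_ball (e : R) : `|e| = c -> l1 (y + e *: unitv R i0) <= rho.
  by move=> he; apply: le_trans (l1D _ _) _; rewrite l1_unit he /c addrC subrK.
exists (y + c *: unitv R i0), (y + (- c) *: unitv R i0), 2^-1; split.
- by apply: in_ball; rewrite gtr0_norm.
- by apply: in_ball; rewrite normrN gtr0_norm.
- by rewrite invr_gt0 ltr0n invf_lt1 ?ltr0n ?ltr1n.
- apply/eqP => /matrixP/(_ ord0 i0); rewrite !mxE !eqxx /= => /addrI; lra.
- by apply/matrixP => k j; rewrite !mxE; field.
Qed.

(* A boundary point with a coordinate y_i strictly between 0 and +-rho lies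
   between the vertex sign(y_i) rho u_i and the point obtained by zeroing y_i
   and rescaling back to the boundary. *)
Lemma ball_boundary_split y (rho : R) i : l1 y = rho -> y ord0 i != 0 ->
  `|y ord0 i| < rho -> splits_in_ball rho y.
Proof.
move=> hl yi_neq0 yi_lt.
have yi_gt0 : 0 < `|y ord0 i| by rewrite normr_gt0.
have rho_gt0 : 0 < rho := lt_trans yi_gt0 yi_lt.
set s := 0 <= y ord0 i; set lam := `|y ord0 i| / rho.
set v := (pm R s * rho) *: unitv R i; set z := y - y ord0 i *: unitv R i.
have lam_gt0 : 0 < lam by rewrite divr_gt0.
have lam_lt1 : lam < 1 by rewrite ltr_pdivrMr // mul1r.
have lam_v : lam *: v = y ord0 i *: unitv R i.
  rewrite scalerA; congr (_ *: _); rewrite /lam -pm_sign.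
  have -> : pm R s * y ord0 i / rho * (pm R s * rho) =
            (pm R s * pm R s) * y ord0 i * (rho / rho) by ring.
  by rewrite pm_sqr mulfV ?gt_eqF // mul1r mulr1.
have z_entry j : z ord0 j = if j == i then 0 else y ord0 j.
  by rewrite !mxE eqxx /=; case: eqP => [->|_]; rewrite ?mulr1 ?subrr ?mulr0 ?subr0.
have l1_z : l1 z = (1 - lam) * rho.
  rewrite (_ : (1 - lam) * rho = rho - `|y ord0 i|); last by rewrite /lam; field; rewrite gt_eqF.
  rewrite -hl /l1 (bigD1 i) //= [in RHS](bigD1 i) //= z_entry eqxx normr0 add0r.
  by rewrite [RHS]addrC addKr; apply: eq_bigr => j hj; rewrite z_entry (negbTE hj).
exists v, ((1 - lam)^-1 *: z), lam; split.
- by rewrite l1_unit normrM pm_norm mul1r gtr0_norm.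
- by rewrite l1Z l1_z gtr0_norm ?invr_gt0 ?subr_gt0 // mulKf // gt_eqF ?subr_gt0.
- by rewrite lam_gt0 lam_lt1.
- apply/eqP => /matrixP/(_ ord0 i); rewrite /v [RHS]mxE z_entry unit_entry !eqxx mulr0.
  by move=> /(congr1 Num.norm); rewrite normrM pm_norm mul1r normr0 gtr0_norm //; lra.
- by rewrite [(1 - lam) *: _]scalerA mulfV ?gt_eqF ?subr_gt0 // scale1r lam_v /z addrC subrK.
Qed.

Lemma ball_nonvertex_split y (rho : R) : (0 < n)%N -> 0 < rho -> l1 y <= rho ->
  (forall i (s : bool), y != (pm R s * rho) *: unitv R i) -> splits_in_ball rho y.
Proof.
move=> n_gt0 rho_gt0 hl not_vertex.
have [hlt|hge] := ltrP (l1 y) rho; first exact: (ball_interior_split (Ordinal n_gt0)).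
have hl1 : l1 y = rho by apply/le_anti; rewrite hl.
have [i yi_neq0] : exists i, y ord0 i != 0.
  apply/existsP; apply: contraTT rho_gt0 => /existsPn y0.
  by rewrite -hl1 /l1 big1 ?ltxx // => j _; rewrite (eqP (negbNE (y0 j))) normr0.
have [yi_lt|yi_ge] := ltrP `|y ord0 i| rho; first exact: ball_boundary_split hl1 yi_neq0 yi_lt.
by case/negP: (not_vertex i (0 <= y ord0 i)); apply/eqP; apply: ball_face hl _; rewrite pm_sign.
Qed.

End L1Geometry.

Section Polytope.
Variables (R : realFieldType) (n : nat).
Implicit Types (a b : {ffun 'I_n -> bool}) (k : ineq_idx n) (p : pt R n).

Definition face_height (t : R) := forall (q r : pt R n) (l : R), inQ q -> inQ r ->
  0 < l -> l < 1 -> l * q.2 + (1 - l) * r.2 = t -> q.2 = t /\ r.2 = t.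

Lemma vertices_of_slice (t rho : R) (c : 'rV[R]_n) : (0 < n)%N -> 0 < rho ->
  (forall x, inQ ((x, t) : pt R n) <-> l1 (x - c) <= rho) -> face_height t ->
  forall p : pt R n, p.2 = t ->
  is_vertex (@inQ R n) p <-> exists i (s : bool), p.1 = c + (pm R s * rho) *: unitv R i.
Proof.
move=> n_gt0 rho_gt0 slice face [x t'] /= ->; split.
- case=> x_in extreme.
  case: (boolP [exists i, exists s, x - c == (pm R s * rho) *: unitv R i]).
    by case/existsP => i /existsP [s /eqP e]; exists i, s; rewrite -e addrC subrK.
  move/existsPn => not_vertex.
  have [y1 [y2 [l [h1 h2 /andP[l_gt0 l_lt1] y12 e]]]] : splits_in_ball rho (x - c).
    apply: ball_nonvertex_split => //; first exact/slice.
    by move=> i s; move/existsPn: (not_vertex i); apply.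
  have in1 : inQ ((y1 + c, t) : pt R n) by apply/slice; rewrite addrK.
  have in2 : inQ ((y2 + c, t) : pt R n) by apply/slice; rewrite addrK.
  have [/addIr y1_eq_y2] : (y1 + c, t) = (y2 + c, t).
    apply: extreme in1 in2 l_gt0 l_lt1 _; rewrite /convcomb /=; congr pair.
      by rewrite !scalerDr addrACA -scalerDl [l + _]addrC subrK scale1r -e subrK.
    by rewrite -mulrDl [l + _]addrC subrK mul1r.
  by rewrite y1_eq_y2 eqxx in y12.
- case=> i [s ->]; split.
    by apply/slice; rewrite [c + _]addrC addrK l1_unit normrM pm_norm mul1r gtr0_norm.
  move=> [qx qt] [rx rt] l q_in r_in l_gt0 l_lt1 e.
  have [/= qt_eq rt_eq] := face _ _ l q_in r_in l_gt0 l_lt1 (esym (congr1 snd e)).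
  move: q_in r_in; rewrite qt_eq rt_eq => /slice q_in /slice r_in.
  have e1 := congr1 fst e; rewrite /= in e1.
  congr pair.
  apply: addIr; apply: (ball_vertex_extreme q_in r_in l_gt0 l_lt1).
  rewrite !scalerBr addrACA -opprD -scalerDl [l + _]addrC subrK scale1r -e1.
  by rewrite [c + _]addrC addrK.
Qed.

(* The bottom and top slices are faces, as 0 <= t <= 2 holds on all of Q. *)
Lemma face_height0 : face_height 0.
Proof.
move=> q r l q_in r_in l_gt0 l_lt1 e.
have := q_in (inr false); have := r_in (inr false); rewrite /= !oppr_le0 => r2 q2.
by split; nra.
Qed.

Lemma face_height2 : face_height 2.
Proof.
move=> q r l q_in r_in l_gt0 l_lt1 e.
have := q_in (inr true); have := r_in (inr true); rewrite /= => r2 q2.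
by split; nra.
Qed.

(* Vertices of Q lie at height 0 or 2: at height 0 < t < 2, the point (x, t)
   is the convex combination with weight 1 - t/2 of (w, 0) and (1 + (n-1) w, 2),
   where w is x - (t/2) 1 rescaled to the unit ball. *)
Lemma vertex_height (p : pt R n) : (0 < n)%N -> is_vertex (@inQ R n) p -> p.2 = 0 \/ p.2 = 2.
Proof.
move=> n_gt0; case: p => x t [/inQE [t_ge0 t_le2 hball] extreme] /=.
have [->|t_neq0] := eqVneq t 0; first by left.
have [->|t_neq2] := eqVneq t 2; first by right.
exfalso.
have h_gt0 : 0 < t / 2 by rewrite divr_gt0 // lt0r t_neq0.
have h_lt1 : t / 2 < 1 by rewrite ltr_pdivrMr // mul1r lt_neqAle t_neq2.
have n_ge1 : (1 : R) <= n%:R by rewrite ler1n.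
have rho_gt0 : 0 < radius n t by rewrite /radius; nra.
set w := (radius n t)^-1 *: (x - center n t).
have bottom : inQ ((w, 0) : pt R n).
  by apply/inQ_height0; rewrite l1Z gtr0_norm ?invr_gt0 // mulrC ler_pdivrMr // mul1r.
have top : inQ ((onesv R n + (n%:R - 1) *: w, 2) : pt R n).
  apply/inQ_height2; rewrite [onesv R n + _]addrC addrK l1Z ger0_norm ?subr_ge0 //.
  by rewrite -[leRHS]mulr1 ler_wpM2l ?subr_ge0 //; apply/inQ_height0.
have l_gt0 : 0 < 1 - t / 2 by rewrite subr_gt0.
have l_lt1 : 1 - t / 2 < 1 by rewrite ltrBlDr ltrDl.
suff /(extreme _ _ _ bottom top l_gt0 l_lt1) [_ /eqP] :
    (x, t) = convcomb (1 - t / 2) (w, 0) (onesv R n + (n%:R - 1) *: w, 2).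
  by rewrite eq_sym pnatr_eq0.
rewrite /convcomb /=; congr pair; last by field.
apply/matrixP => k j; rewrite !mxE /radius.
by field; rewrite gt_eqF //; nra.
Qed.

(* Q is bounded: |x_i| <= (t/2) + radius t <= n + 2. *)
Lemma bounded_Q : bounded_set (@inQ R n).
Proof.
have n_ge0 : (0 : R) <= n%:R := ler0n _ _.
exists (n%:R + 2) => -[x t] /inQE [t_ge0 t_le2 hball] /=.
split; last by rewrite ger0_norm //; lra.
move=> i; have := le_trans (l1_coord _ i) hball.
rewrite /radius !mxE mulr1 !ler_norml => /andP [lo hi]; apply/andP; split; nra.
Qed.

Lemma is_integral_int (z : int) : is_integral (z%:~R : R).
Proof. by exists z. Qed.

Lemma is_integral_nat (m : nat) : is_integral (m%:R : R).
Proof. exact: is_integral_int m. Qed.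

Lemma is_integral_add (u v : R) : is_integral u -> is_integral v -> is_integral (u + v).
Proof. by case=> a -> [b ->]; exists (a + b); rewrite intrD. Qed.

Lemma is_integral_mul (u v : R) : is_integral u -> is_integral v -> is_integral (u * v).
Proof. by case=> a -> [b ->]; exists (a * b); rewrite intrM. Qed.

Lemma is_integral_pm (s : bool) : is_integral (pm R s).
Proof. by case: s; [exists 1 | exists (-1); rewrite intrN]. Qed.

Lemma interior_height (p : pt R n) : interior (@inQ R n) p -> 0 < p.2 < 2.
Proof.
case: p => x t [eps [eps_gt0 hball]] /=.
have shifted (d : R) : `|d| < eps -> inQ ((x, t + d) : pt R n).
  by move=> hd; apply: hball => [i|] /=; rewrite ?subrr ?normr0 // addrC addKr.
have half_lt : `|eps / 2| < eps by rewrite gtr0_norm ?divr_gt0 //; lra.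
have up := shifted _ half_lt (inr true).
have down := shifted (- (eps / 2)) ltac:(by rewrite normrN) (inr false).
rewrite /= in up down; apply/andP; split; lra.
Qed.

Lemma integral_in_0_2 (t : R) : is_integral t -> 0 < t < 2 -> t = 1.
Proof.
case=> z ->; rewrite ltr0z -[2]/((2 : int)%:~R : R) ltr_int => /andP [z_gt0 z_lt2].
by rewrite (_ : z = 1) //; lia.
Qed.

(* For an integer vector x and the pattern b = [x_i >= 1], b x >= |b^+|, i.e.
   the inequality of index b is tight or violated at (x, 1). *)
Lemma sign_pattern_dot_ge (x : 'rV[R]_n) : (forall i, is_integral (x ord0 i)) ->
  cnt R [ffun i => 1 <= x ord0 i] <= dot [ffun i => 1 <= x ord0 i] x.
Proof.
move=> x_int; rewrite -sum_indicator; apply: ler_sum => i _; rewrite /sgnv ffunE.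
case: (lerP 1 (x ord0 i)) => [|x_lt1]; first by rewrite mul1r.
have [z xz] := x_int i; move: x_lt1; rewrite mulN1r oppr_ge0 xz ltrz1 lerz0; lia.
Qed.

(* (ii): moving an integer point at height 1 slightly in the direction b
   violates the inequality of index b. *)
Lemma no_integer_interior_point (p : pt R n) : (0 < n)%N ->
  int_point p -> ~ interior (@inQ R n) p.
Proof.
move=> n_gt0 [x_int t_int] p_int.
have t1 : p.2 = 1 := integral_in_0_2 t_int (interior_height p_int).
case: p p_int t1 x_int {t_int} => x t [eps [eps_gt0 hball]] /= t1 x_int.
pose b := [ffun i => 1 <= x ord0 i].
have : inQ ((x + (eps / 2) *: \row_i sgnv R b i, t) : pt R n).
  apply: hball => [i|]; last by rewrite subrr normr0.
  rewrite !mxE /= addrAC subrr add0r normrM (pm_norm R (b i)) mulr1 gtr0_norm ?divr_gt0 //; lra.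
move/(_ (inl b)); rewrite /= -/(dot b _) dot_lin t1 mulr1 /piv -/(cnt R b).
have -> : dot b (\row_i sgnv R b i) = n%:R.
  rewrite /dot (eq_bigr (fun=> 1)) ?sumr_const ?card_ord // => i _.
  by rewrite mxE (pm_sqr R (b i)).
have := sign_pattern_dot_ge x_int; have : (0 : R) < n%:R by rewrite ltr0n.
nra.
Qed.

Definition tight_at (k : ineq_idx n) (p : pt R n) : Prop :=
  ineq_lhs k p = ineq_rhs R k /\ forall k', k' <> k -> ineq_lhs k' p < ineq_rhs R k'.

Lemma tight_inQ k p : tight_at k p -> inQ p.
Proof.
case=> tight strict k'; have [->|/eqP k'_neq] := eqVneq k' k; first by rewrite tight.
exact/ltW/strict.
Qed.

Definition indicator (a : {ffun 'I_n -> bool}) : 'rV[R]_n := \row_i (if a i then 1 else 0).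

Lemma dot_indicator b a : dot b (indicator a) = \sum_i (if a i then sgnv R b i else 0).
Proof. by apply: eq_bigr => i _; rewrite mxE; case: (a i); rewrite ?mulr1 ?mulr0. Qed.

Lemma dot_indicator_self a : dot a (indicator a) = cnt R a.
Proof.
by rewrite dot_indicator -sum_indicator; apply: eq_bigr => i _; rewrite /sgnv; case: (a i).
Qed.

(* b chi_a < |b^+| unless b = a: every coordinate contributes at most its
   share of |b^+|, and a coordinate where a and b differ contributes less. *)
Lemma dot_indicator_lt b a : b != a -> dot b (indicator a) < cnt R b.
Proof.
move=> b_neq_a; have [i0 differ] : exists i0, b i0 != a i0.
  apply/existsP; apply: contraNT b_neq_a => /existsPn same.
  by apply/eqP/ffunP => i; apply/eqP/negbNE/same.
rewrite dot_indicator -sum_indicator (bigD1 i0) //= [X in _ < X](bigD1 i0) //=.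
apply: ltr_leD; first by move: differ; rewrite /sgnv; case: (a i0); case: (b i0) => //= _; lra.
by apply: ler_sum => i _; rewrite /sgnv; case: (a i); case: (b i) => /=; lra.
Qed.

Lemma tight_facet_ineq a : tight_at (inl a) (indicator a, 1).
Proof.
split=> [|[b|[]] k_neq] /=; [| |lra|lra].
  by rewrite -/(dot a _) dot_indicator_self /piv -/(cnt R a); ring.
have b_neq_a : b != a by apply/eqP => e; apply: k_neq; rewrite e.
by rewrite -/(dot b _) /piv -/(cnt R b); have := dot_indicator_lt b_neq_a; lra.
Qed.

Lemma tight_facet_floor : tight_at (inr false) (0, 0).
Proof.
split=> [|[b|[]] k_neq] /=; [by rewrite oppr0 | |lra|by case: (k_neq erefl)].
by rewrite mulr0 subr0 big1 ?ltr01 // => i _; rewrite mxE mulr0.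
Qed.

Section AtLeastTwo.
Hypothesis n_ge2 : (2 <= n)%N.

Lemma vertices_at_height0 (p : pt R n) : p.2 = 0 ->
  is_vertex (@inQ R n) p <-> exists i (s : bool), p.1 = pm R s *: unitv R i.
Proof.
have slice x : inQ ((x, 0) : pt R n) <-> l1 (x - 0) <= 1 by rewrite subr0; exact: inQ_height0.
move=> p2; rewrite (vertices_of_slice (ltnW n_ge2) ltr01 slice face_height0 p2).
by split=> -[i [s e]]; exists i, s; rewrite e add0r mulr1.
Qed.

Lemma vertices_at_height2 (p : pt R n) : p.2 = 2 ->
  is_vertex (@inQ R n) p <->
  exists i (s : bool), p.1 = onesv R n + (pm R s * (n%:R - 1)) *: unitv R i.
Proof.
have rho_gt0 : (0 : R) < n%:R - 1 by rewrite subr_gt0 ltr1n.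
exact: (vertices_of_slice (ltnW n_ge2) rho_gt0 (@inQ_height2 R n) face_height2).
Qed.

Lemma vertex_int_point (p : pt R n) : is_vertex (@inQ R n) p -> int_point p.
Proof.
case: p => x t p_vert; have [/= t0|/= t2] := vertex_height (ltnW n_ge2) p_vert.
- have [i [s /= ->]] := (vertices_at_height0 (p := (x, t)) t0).1 p_vert.
  split=> [j|]; last by rewrite /= t0; exact: (is_integral_nat 0).
  by rewrite unit_entry; case: eqP => _; [exact: is_integral_pm | exact: (is_integral_nat 0)].
- have [i [s /= ->]] := (vertices_at_height2 (p := (x, t)) t2).1 p_vert.
  split=> [j|]; last by rewrite /= t2; exact: (is_integral_nat 2).
  rewrite !mxE; apply: is_integral_add; first exact: (is_integral_nat 1).
  apply: is_integral_mul; last exact: is_integral_nat.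
  apply: is_integral_mul; first exact: is_integral_pm.
  by apply: is_integral_add; [exact: is_integral_nat | exact: (is_integral_int (-1))].
Qed.

Lemma tight_facet_ceiling : tight_at (inr true) (onesv R n, 2).
Proof.
have n_ge2R : (2 : R) <= n%:R by rewrite ler_nat.
split=> [//|[b|[]] k_neq /=]; last 2 first.
- by case: (k_neq erefl).
- lra.
- by rewrite -/(dot b _) dot_ones /piv -/(cnt R b); lra.
Qed.

Lemma tight_integer_point k : exists2 p : pt R n, int_point p & tight_at k p.
Proof.
case: k => [a|[]].
- exists (indicator a, 1); last exact: tight_facet_ineq.
  split=> [i|]; last exact: (is_integral_nat 1).
  by rewrite mxE; case: (a i); [exact: (is_integral_nat 1) | exact: (is_integral_nat 0)].
- exists (onesv R n, 2); last exact: tight_facet_ceiling.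
  by split=> [i|]; [rewrite mxE; exact: (is_integral_nat 1) | exact: (is_integral_nat 2)].
- exists (0, 0); last exact: tight_facet_floor.
  by split=> [i|]; [rewrite mxE; exact: (is_integral_nat 0) | exact: (is_integral_nat 0)].
Qed.

End AtLeastTwo.
End Polytope.

Theorem mainTheorem6 (R : realFieldType) (n : nat) (hn : (2 <= n)%N) :
  (* (i) Q is a polytope with integral vertices, described at x_{n+1} = 0, 2 *)
  (bounded_set (@inQ R n)
   /\ (forall p, is_vertex (@inQ R n) p -> int_point p)
   /\ (forall p : pt R n, p.2 = 0 ->
         is_vertex (@inQ R n) p <->
         exists (i : 'I_n) (s : bool), p.1 = pm R s *: unitv R i)
   /\ (forall p : pt R n, p.2 = 2 ->
         is_vertex (@inQ R n) p <->
         exists (i : 'I_n) (s : bool),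
           p.1 = onesv R n + (pm R s * (n%:R - 1)) *: unitv R i))
  (* (ii) no integer point in the interior of Q *)
  /\ (forall p : pt R n, int_point p -> ~ interior (@inQ R n) p)
  (* (iii) each defining inequality is tight at some integer point of Q that
     satisfies all other defining inequalities strictly *)
  /\ (forall k : ineq_idx n, exists p : pt R n,
         int_point p /\ inQ p /\ ineq_lhs k p = ineq_rhs R k /\
         forall k', k' <> k -> ineq_lhs k' p < ineq_rhs R k').
Proof.
split; first split.
- exact: bounded_Q.
- split; first exact: vertex_int_point.
  by split; [exact: vertices_at_height0 | exact: vertices_at_height2].
split=> [p | k]; first exact: no_integer_interior_point (ltnW hn).
have [p p_int p_tight] := tight_integer_point R hn k.
by exists p; split; [|split; [exact: tight_inQ p_tight | exact: p_tight]].
Qed.
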